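(* Let $R$ be an associative ring with identity and involution $*$, let $a\in R^{\#}\cap R^{\dagger}$ and let $x\in PE(R)$. If $x=aa^{\dagger}xa^{\dagger}a$, then $a^{\dagger}axaa^{\dagger}\in PE(R)$.
   Context: An involution on $R$ is a map $x\mapsto x^*$ with $(x^* )^*=x$, $(x+y)^*=x^*+y^*$, $(xy)^*=y^*x^*$. An element $a$ is Moore–Penrose invertible if there is $b$ with $aba=a$, $bab=b$, $(ab)^*=ab$, $(ba)^*=ba$; such $b$ is unique, denoted $a^{\dagger}$ (the paper also writes $a^+$), and $R^{\dagger}$ is the set of such $a$. An element $a$ is group invertible if there is $b$ with $aba=a$, $bab=b$, $ab=ba$; such $b$ is unique, denoted $a^{\#}$, and $R^{\#}$ is the set of such $a$. $PE(R)=\{e\in R: e^2=e=e^*\}$ is the set of projections. *)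

From mathcomp Require Import all_boot all_algebra.
Set Implicit Arguments. Unset Strict Implicit. Unset Printing Implicit Defensive.
Import GRing.Theory.
Local Open Scope ring_scope.

Definition involution (R : pzRingType) (star : R -> R) : Prop :=
  [/\ forall x, star (star x) = x,
      forall x y, star (x + y) = star x + star y &
      forall x y, star (x * y) = star y * star x].

Definition is_MP_inverse (R : pzRingType) (star : R -> R) (a b : R) : Prop :=
  [/\ a * b * a = a, b * a * b = b, star (a * b) = a * b & star (b * a) = b * a].

Definition MP_invertible (R : pzRingType) (star : R -> R) (a : R) : Prop :=
  exists b, is_MP_inverse star a b.

Definition group_invertible (R : pzRingType) (a : R) : Prop :=
  exists b, [/\ a * b * a = a, b * a * b = b & a * b = b * a].

Definition is_projection (R : pzRingType) (star : R -> R) (e : R) : Prop :=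
  e * e = e /\ star e = e.

From mathcomp Require Import all_boot all_algebra.
Local Open Scope ring_scope.
Import GRing.Theory.

(* Since a a^+ and a^+ a are self-adjoint, applying the involution to
   x = (a a^+) x (a^+ a) gives x = x^* = (a^+ a) x (a a^+); so the element in
   question is x itself. *)

Lemma involution_mul3 {R : pzRingType} {star : R -> R} (u v w : R) :
  involution star -> star (u * v * w) = star w * star v * star u.
Proof. by case=> _ _ starM; rewrite !starM mulrA. Qed.

Lemma selfadjoint_sandwich_swap {R : pzRingType} {star : R -> R} (p q e : R) :
  involution star -> star p = p -> star q = q -> star e = e ->
  e = p * e * q -> e = q * e * p.
Proof.
move=> inv p_sa q_sa e_sa e_eq.
by rewrite -{1}e_sa {1}e_eq involution_mul3 // p_sa q_sa e_sa.
Qed.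

Theorem lemma2p8 (R : pzRingType) (star : R -> R) (a adag x : R) :
  involution star ->
  group_invertible a ->
  is_MP_inverse star a adag ->
  is_projection star x ->
  x = a * adag * x * adag * a ->
  is_projection star (adag * a * x * a * adag).
Proof.
move=> inv _ [_ _ aadag_sa adaga_sa] [x_idem x_sa] x_eq.
have -> : adag * a * x * a * adag = x.
  rewrite -mulrA; symmetry.
  apply: (selfadjoint_sandwich_swap (a * adag) (adag * a) x inv) => //.
  by rewrite mulrA -x_eq.
by split.
Qed.
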